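(* Consider the output of the Clustering procedure described in the context. Let $j' \in C$ be a client that was selected as a cluster center, and let $j \in C$ be a client with $j \in C(j')$. Then for every facility $i$ in the cluster proposition $CP(j')$ that $j'$ had at the moment it was selected as a center, $c_{ij} \le 3\, D^C_{\max}(j)$.
   Context: Metric Fault-Tolerant Facility Placement (FTFP): a finite set $F$ of facilities with opening costs $f_i\ge 0$, a finite set $C$ of clients with integer requirements $r_j\ge 1$, and connection costs $c_{ij}$ satisfying the triangle inequality (extended to a metric on $F\cup C$). A fractional solution $(\bar x,\bar y)$ assigns $\bar y_i\ge 0$ to facilities and $\bar x_{ij}\in\{0,\bar y_i\}$ to pairs (facilities may be split into co-located copies so that this holds and so that subsets of any prescribed volume below exist). For $A\subseteq F$, $\mathrm{vol}(A)=\sum_{i\in A}\bar y_i$. For a client $j$, $F_j=\{i:\bar x_{ij}>0\}$. For $A\subseteq F$ with $\mathrm{vol}(A)\ge r$, $B(j,A,r)$ denotes a subset of $A$ of volume exactly $r$ minimizing the radius $\max_{i}c_{ij}$ over the subset. The close facilities of $j$ are $F^C_j=B(j,F_j,r_j)$ and $D^C_{\max}(j)=\max_{i\in F^C_j}c_{ij}$. Clustering procedure: initially $CP(j):=F^C_j$ and $q_j:=D^C_{\max}(j)$ for all $j$ (the values $q_j$ are never changed), and every client has its requirement $r_j$ as a working value. While some client has positive working requirement: select a client $j$ with positive working requirement minimizing $q_j$ and set its working requirement to $0$; let $N(j)$ be the set of clients $j''$ with positive working requirement and $CP(j)\cap CP(j'')\neq\emptyset$; for each $j'\in N(j)$ set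 $r_{j'}:=\max(0, r_{j'}-\lceil \mathrm{vol}(CP(j)\cap CP(j'))\rceil)$ and $CP(j'):=B(j',CP(j')\setminus CP(j),r_{j'})$; then form the cluster $C(j)=\{j\}\cup N(j)\cup CP(j)$ with center $j$. *)

From HB Require Import structures.
From mathcomp Require Import all_boot all_order all_algebra.
Set Implicit Arguments. Unset Strict Implicit. Unset Printing Implicit Defensive.
Import Order.TTheory GRing.Theory Num.Theory.
Local Open Scope ring_scope.

Section FTFP.
Variables (R : archiRealFieldType) (F C : finType).

Definition is_metric (d : F + C -> F + C -> R) : Prop :=
  [/\ forall u, d u u = 0,
      forall u v, 0 <= d u v,
      forall u v, d u v = d v u
    & forall u v w, d u w <= d u v + d v w].

Definition cost (d : F + C -> F + C -> R) (i : F) (j : C) : R := d (inl i) (inr j).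

Definition vol (y : F -> R) (A : {set F}) : R := \sum_(i in A) y i.

Definition Fj (x : F -> C -> R) (j : C) : {set F} := [set i | 0 < x i j].

(* radius of A around j : max_{i in A} c_ij (0 for the empty set) *)
Definition radius (c : F -> C -> R) (j : C) (A : {set F}) : R :=
  \big[Num.max/0]_(i in A) c i j.

(* S is a valid choice of B(j, A, r) *)
Definition isB (y : F -> R) (c : F -> C -> R) (j : C) (A : {set F}) (r : R)
    (S : {set F}) : Prop :=
  [/\ S \subset A, vol y S = r &
      forall S' : {set F}, S' \subset A -> vol y S' = r -> radius c j S <= radius c j S'].

(* D^C_max(j), where FC j is the chosen set of close facilities F^C_j *)
Definition DCmax (c : F -> C -> R) (FC : C -> {set F}) (j : C) : R :=
  radius c j (FC j).

(* state of the clustering procedure: working requirements and CP(.) *)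
Record state := State { wreq : C -> int; cprop : C -> {set F} }.

(* N(j): clients with positive working requirement (j's has just been set
   to 0, hence j excluded) whose CP meets CP(j) *)
Definition nbrs (s : state) (j : C) : {set C} :=
  [set j2 | [&& 0 < wreq s j2, j2 != j & cprop s j :&: cprop s j2 != set0]].

Definition cluster (s : state) (j : C) : {set C + F} :=
  [set inl j] :|: (inl @: nbrs s j) :|: (inr @: cprop s j).

(* one iteration of the while loop: client j is selected as a center in
   state s, producing state s'; q are the (fixed) values q_j *)
Definition step (y : F -> R) (c : F -> C -> R) (q : C -> R)
    (s : state) (j : C) (s' : state) : Prop :=
  [/\ 0 < wreq s j,
      forall j2, 0 < wreq s j2 -> q j <= q j2,
      wreq s' j = 0 /\ cprop s' j = cprop s j,
      forall j2, j2 \in nbrs s j ->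
        wreq s' j2 = Num.max 0 (wreq s j2 - Num.ceil (vol y (cprop s j :&: cprop s j2)))
        /\ isB y c j2 (cprop s j2 :\: cprop s j) (wreq s' j2)%:~R (cprop s' j2)
    & forall j2, j2 != j -> j2 \notin nbrs s j ->
        wreq s' j2 = wreq s j2 /\ cprop s' j2 = cprop s j2].

End FTFP.

From HB Require Import structures.
From mathcomp Require Import all_boot all_order all_algebra.
Import Order.TTheory GRing.Theory Num.Theory.
Set Implicit Arguments. Unset Strict Implicit. Unset Printing Implicit Defensive.
Local Open Scope ring_scope.

(* Throughout the clustering procedure the cluster proposition
   CP(j) of every client j only shrinks: it starts as the close facilities
   F^C_j and each update replaces it by a subset of CP(j) \ CP(center).
   Hence every facility of CP(j) lies within distance D^C_max(j) of j.
   Now let j' be selected with cluster proposition CP(j'), i in CP(j'),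
   and j in C(j').  If j = j' then c_ij <= D^C_max(j) directly.  Otherwise
   j is a neighbour of j': some facility i' lies in CP(j') and CP(j), and
   j had positive working requirement, so the selection rule gives
   D^C_max(j') = q_j' <= q_j = D^C_max(j).  The detour i -> j' -> i' -> j
   then yields c_ij <= 2 D^C_max(j') + D^C_max(j) <= 3 D^C_max(j). *)

Section Clustering.
Variables (R : archiRealFieldType) (F C : finType).

Lemma le_radius (c : F -> C -> R) (j : C) (A : {set F}) (i : F) :
  i \in A -> c i j <= radius c j A.
Proof. by move=> iA; exact: le_bigmax_cond. Qed.

Definition within_close (FC : C -> {set F}) (s : state F C) : Prop :=
  forall j, cprop s j \subset FC j.

(* One iteration preserves the invariant, since CP(j') is either unchanged
   or replaced by a subset of CP(j') \ CP(center). *)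
Lemma step_within_close (y : F -> R) (c : F -> C -> R) (q : C -> R)
    (FC : C -> {set F}) (s s' : state F C) (j : C) :
  step y c q s j s' -> within_close FC s -> within_close FC s'.
Proof.
move=> [_ _ [_ CPj] Hnbrs Hother] inv j2.
have [->|j2_ne] := eqVneq j2 j; first by rewrite CPj.
have [j2_nbr|j2_far] := boolP (j2 \in nbrs s j).
  have [_ [sub _ _]] := Hnbrs j2 j2_nbr.
  by rewrite (subset_trans sub) // (subset_trans (subsetDl _ _)).
by rewrite (proj2 (Hother j2 j2_ne j2_far)).
Qed.

Lemma run_within_close (y : F -> R) (c : F -> C -> R) (q : C -> R)
    (FC : C -> {set F}) (n : nat) (st : nat -> state F C) (sel : nat -> C) :
  (forall j, cprop (st 0%N) j = FC j) ->
  (forall k, (k < n)%N -> step y c q (st k) (sel k) (st k.+1)) ->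
  forall m, (m <= n)%N -> within_close FC (st m).
Proof.
move=> init Hstep; elim=> [|m IH] m_le j; first by rewrite init.
by apply: step_within_close (Hstep m m_le) (IH (ltnW m_le)) j.
Qed.

Lemma cluster_clientP (s : state F C) (j' j : C) :
  inl j \in cluster s j' -> j = j' \/ j \in nbrs s j'.
Proof.
rewrite /cluster !in_setU in_set1.
case/orP=> [/orP [/eqP [->] | /imsetP [j2 j2_nbr [->]]] | /imsetP [] //];
  by [left | right].
Qed.

Lemma cost_detour (d : F + C -> F + C -> R) (i i' : F) (j j' : C) :
  is_metric d -> cost d i j <= cost d i j' + cost d i' j' + cost d i' j.
Proof.
move=> [_ _ dsym dtri]; rewrite /cost -addrA.
apply: le_trans (dtri _ (inr j') _) _; rewrite lerD2l.
by rewrite (dsym (inl i')); apply: dtri.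
Qed.

Lemma step_cluster_bound (d : F + C -> F + C -> R) (y : F -> R)
    (FC : C -> {set F}) (s s' : state F C) (j' j : C) (i : F) :
  is_metric d -> within_close FC s ->
  step y (cost d) (DCmax (cost d) FC) s j' s' ->
  inl j \in cluster s j' -> i \in cprop s j' ->
  cost d i j <= 3 * DCmax (cost d) FC j.
Proof.
move=> metric inv [_ q_min _ _ _] j_in i_in.
have close k f : f \in cprop s k -> cost d f k <= DCmax (cost d) FC k.
  by move=> f_in; apply: le_radius; apply: (subsetP (inv k)).
have D_ge0 k f : f \in cprop s k -> 0 <= DCmax (cost d) FC k.
  move=> f_in; apply: le_trans (close k f f_in).
  by case: metric => _ d_ge0 _ _; exact: d_ge0.
have three D : 3 * D = D + D + D by rewrite mulr_natl !mulrSr mulr0n add0r.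
have [-> | j_nbr] := cluster_clientP j_in.
  rewrite (le_trans (close j' i i_in)) // three -addrA lerDl.
  by rewrite addr_ge0 // (D_ge0 j' i).
move: j_nbr; rewrite inE => /and3P [wj_pos _ /set0Pn [i' /setIP [i'_j' i'_j]]].
have q_le : DCmax (cost d) FC j' <= DCmax (cost d) FC j by exact: q_min.
rewrite (le_trans (cost_detour i i' j j' metric)) // three.
rewrite lerD // ?(close j i' i'_j) // lerD //.
- exact: le_trans (close j' i i_in) q_le.
- exact: le_trans (close j' i' i'_j') q_le.
Qed.

End Clustering.

Theorem lemma1 (R : archiRealFieldType) (F C : finType)
    (d : F + C -> F + C -> R) (y : F -> R) (x : F -> C -> R)
    (r : C -> nat) (FC : C -> {set F})
    (n : nat) (st : nat -> state F C) (sel : nat -> C) :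
  is_metric d ->
  (forall i, 0 <= y i) ->
  (forall i j, x i j = 0 \/ x i j = y i) ->
  (forall j, (0 < r j)%N) ->
  (forall j, isB y (cost d) j (Fj x j) (r j)%:R (FC j)) ->
  (forall j, wreq (st 0%N) j = (r j)%:Z /\ cprop (st 0%N) j = FC j) ->
  (forall k, (k < n)%N ->
     step y (cost d) (DCmax (cost d) FC) (st k) (sel k) (st k.+1)) ->
  forall (k : nat) (j : C) (i : F),
    (k < n)%N ->
    inl j \in cluster (st k) (sel k) ->
    i \in cprop (st k) (sel k) ->
    cost d i j <= 3 * DCmax (cost d) FC j.
Proof.
move=> metric _ _ _ _ init Hstep k j i k_lt j_in i_in.
have inv := run_within_close (fun j => proj2 (init j)) Hstep (ltnW k_lt).
exact: step_cluster_bound metric inv (Hstep k k_lt) j_in i_in.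
Qed.
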